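(* Let $\Sigma\in\mathbb R^{d\times d}$ be symmetric positive semidefinite with eigenvalues $\lambda_1\ge\dots\ge\lambda_d\ge0$ and corresponding orthonormal eigenvectors $u_1,\dots,u_d$. For each $\ell$ let $u_{\ell,(1)}^2\le\dots\le u_{\ell,(d)}^2$ be the order statistics of $u_{\ell,1}^2,\dots,u_{\ell,d}^2$. Let $\Delta$ be any diagonal matrix with $\Delta\succeq\Sigma$, and let $\Delta_{(1,1)}\le\dots\le\Delta_{(d,d)}$ be the order statistics of its diagonal entries. Then for all $k=1,\dots,d$, $$\Delta_{(k,k)}\ \ge\ b_k(\Sigma):=\max_{\ell\le d}\ \lambda_\ell\sum_{j=1}^k u_{\ell,(j)}^2.$$
   Context: $\succeq$ denotes the positive semidefinite order. *)

From mathcomp Require Import all_boot all_order all_algebra.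
Set Implicit Arguments. Unset Strict Implicit. Unset Printing Implicit Defensive.
Import Order.TTheory GRing.Theory Num.Theory.
Local Open Scope ring_scope.

Definition psd (R : realFieldType) (d : nat) (A : 'M[R]_d) : Prop :=
  A^T = A /\ forall x : 'cV[R]_d, 0 <= (x^T *m A *m x) 0 0.

(* k-th order statistic (0-indexed, increasing order) of a sequence. *)
Definition ordstat (R : realFieldType) (s : seq R) (k : nat) : R :=
  nth 0 (sort <=%R s) k.

(* Order statistics of the squared coordinates of the l-th column of U:
   u_{l,(j+1)}^2 = sq_ordstat U l j  (0-indexed j). *)
Definition sq_ordstat (R : realFieldType) (d : nat) (U : 'M[R]_d) (l : 'I_d)
  (j : nat) : R :=
  ordstat [seq (U i l) ^+ 2 | i <- enum 'I_d] j.

(* b_k(Sigma) = max_l lam_l * sum_{j=1}^k u_{l,(j)}^2 , k >= 1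
   (max over the nonempty range 'I_d, with nonnegative terms, so the
    default 0 of the big max is harmless). *)
Definition bk (R : realFieldType) (d : nat) (lam : 'I_d -> R) (U : 'M[R]_d)
  (k : nat) : R :=
  \big[Num.max/0]_(l < d) (lam l * \sum_(j < k) sq_ordstat U l j).

From mathcomp Require Import all_boot all_order all_algebra.
Set Implicit Arguments. Unset Strict Implicit. Unset Printing Implicit Defensive.
Import Order.TTheory GRing.Theory Num.Theory.
Local Open Scope ring_scope.

(* Fix an eigenpair (lam_l, u_l) of Sigma and k.  Let c be the k-th smallest
   diagonal entry of Delta and P the set of indices i with Delta_ii <= c, so
   that #|P| >= k.  Testing Delta - Sigma >= 0 on the vector x = u_l
   restricted to P gives, with s = sum_{i in P} u_{l,i}^2 = <u_l, x>,
       lam_l s^2 <= x^T Sigma x <= x^T Delta x <= c s,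
   hence lam_l s <= c; and the sum of the k smallest u_{l,i}^2 is at most s
   because P has at least k elements.  Maximizing over l gives the claim. *)

Section OrderStatistics.
Variable R : realFieldType.
Implicit Types (s : seq R) (k : nat).

Lemma sorted_take_le_nth s k x :
  sorted <=%R s -> (0 < k <= size s)%N -> x \in take k s -> x <= nth 0 s k.-1.
Proof.
move=> ss /andP[k0 ks] /(nthP 0) [j]; rewrite size_takel // => hj <-.
rewrite nth_take //; apply: le_sorted_leq_nth => //; rewrite ?inE /=.
- exact: leq_trans hj ks.
- by rewrite prednK // (leq_trans _ ks).
- by rewrite -ltnS prednK.
Qed.

Lemma sorted_drop_ge_nth s k x :
  sorted <=%R s -> (0 < k <= size s)%N -> x \in drop k s -> nth 0 s k.-1 <= x.
Proof.
move=> ss /andP[k0 ks] /(nthP 0) [j]; rewrite size_drop => hj <-.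
rewrite nth_drop; apply: le_sorted_leq_nth => //; rewrite ?inE /=.
- by rewrite prednK // (leq_trans _ ks).
- by rewrite -ltn_subRL.
- by rewrite (leq_trans (leq_pred _)) // leq_addr.
Qed.

Lemma ordstat_ge0 s k :
  (forall x, x \in s -> 0 <= x) -> (k < size s)%N -> 0 <= ordstat s k.
Proof.
by move=> s0 hk; apply: s0; rewrite -(mem_sort <=%R) mem_nth ?size_sort.
Qed.

(* The sum of the k smallest entries, written with the k-th smallest value c
   and the truncations (c - x)_+ : only the first k sorted entries contribute. *)
Lemma sum_ordstat_truncated s k : (0 < k <= size s)%N ->
  \sum_(j < k) ordstat s j
  = ordstat s k.-1 *+ k - \sum_(x <- s) Num.max (ordstat s k.-1 - x) 0.
Proof.
move=> hk; rewrite -(perm_big _ (permEl (perm_sort <=%R s))) /ordstat.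
set t := sort _ s; set c := nth 0 t k.-1.
have st : sorted <=%R t := sort_le_sorted s.
have hkt : (0 < k <= size t)%N by rewrite size_sort.
have ks : (k <= size t)%N by case/andP: hkt.
rewrite -[in RHS](cat_take_drop k t) big_cat.
rewrite [\sum_(x <- drop k t) _]big1_seq => [|x hx]; last first.
  by apply/max_idPr; rewrite subr_le0 (sorted_drop_ge_nth st hkt hx).
have -> : \sum_(x <- take k t) Num.max (c - x) 0 = \sum_(x <- take k t) (c - x).
  apply: eq_big_seq => x hx.
  by apply/max_idPl; rewrite subr_ge0 (sorted_take_le_nth st hkt hx).
rewrite sumrB (big_nth 0) size_takel // sumr_const_nat subn0 /= addr0.
rewrite opprB addrC subrK [RHS](big_nth 0) size_takel // big_mkord.
by apply: eq_bigr => j _; rewrite nth_take.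
Qed.

Lemma card_le_ordstat (T : finType) (f : T -> R) k : (0 < k <= #|T|)%N ->
  (k <= #|[pred i | (f i <= ordstat [seq f i | i <- enum T] k.-1)%R]|)%N.
Proof.
move=> hk; rewrite /ordstat; set t := sort _ _.
have tperm : perm_eq t [seq f i | i <- enum T] := permEl (perm_sort _ _).
have st : sorted <=%R t := sort_le_sorted _.
have hkt : (0 < k <= size t)%N by rewrite (perm_size tperm) size_map -cardT.
clearbody t; set c := nth 0 t k.-1.
have : all (<=%R^~ c) (take k t).
  by apply/allP => x; apply: sorted_take_le_nth.
rewrite all_count => /eqP htake.
have -> : #|[pred i | f i <= c]| = count (<=%R^~ c) t.
  by rewrite (permP tperm) count_map cardE size_filter [in RHS]enumT.
have ks : (k <= size t)%N by case/andP: hkt.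
by rewrite -(cat_take_drop k t) count_cat htake size_takel ?leq_addr.
Qed.

Lemma sum_ordstat_le (T : finType) (w : T -> R) (P : pred T) k :
  (forall i, 0 <= w i) -> (0 < k <= #|P|)%N ->
  \sum_(j < k) ordstat [seq w i | i <- enum T] j <= \sum_(i | P i) w i.
Proof.
move=> w0 /andP[k0 kP]; set s := [seq w i | i <- enum T].
have ks : (k <= size s)%N by rewrite size_map -cardT (leq_trans kP) ?max_card.
have hks : (0 < k <= size s)%N by rewrite k0.
set c := ordstat s k.-1.
have c0 : 0 <= c by apply: ordstat_ge0 => [x /mapP[i _ ->]|]; rewrite ?prednK.
rewrite sum_ordstat_truncated // -/c big_map big_enum (bigID P) opprD addrA.
have trunc0 : 0 <= \sum_(i | ~~ P i) Num.max (c - w i) 0.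
  by apply: sumr_ge0 => i _; rewrite le_max lexx orbT.
have kc : c *+ k <= c *+ #|P| by exact: ler_wpMn2l.
have onP : c *+ #|P| - \sum_(i | P i) Num.max (c - w i) 0 <= \sum_(i | P i) w i.
  rewrite -sumr_const -sumrB; apply: ler_sum => i _.
  by rewrite lerBlDr -lerBlDl le_max lexx.
apply: le_trans onP; rewrite lerBlDr -addrA (addrC (- _)) addrA.
by rewrite lerD2r (le_trans kc) // lerDl.
Qed.

End OrderStatistics.

Section QuadraticForms.
Variables (R : realFieldType) (d : nat).
Implicit Types (A S : 'M[R]_d) (x v : 'cV[R]_d).

Definition qform A x : R := (x^T *m A *m x) 0 0.

Lemma qform_diag (delta : 'rV[R]_d) x :
  qform (diag_mx delta) x = \sum_i delta 0 i * x i 0 ^+ 2.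
Proof.
rewrite /qform mul_mx_diag mxE; apply: eq_bigr => i _; rewrite !mxE.
by rewrite [_ * delta 0 i]mulrC -mulrA -expr2.
Qed.

Lemma psd_sub_qform_le A S x : psd (A - S) -> qform S x <= qform A x.
Proof.
case=> _ /(_ x); rewrite mulmxBr mulmxBl.
by rewrite [X in 0 <= X]mxE [X in 0 <= _ + X]mxE subr_ge0.
Qed.

Lemma dominating_diag_ge0 S (delta : 'rV[R]_d) i :
  psd S -> psd (diag_mx delta - S) -> 0 <= delta 0 i.
Proof.
move=> [_ S_psd] /(psd_sub_qform_le (delta_mx i 0)).
rewrite qform_diag (bigD1 i) //= big1 => [|j /negbTE ji]; last first.
  by rewrite mxE ji expr2 !mulr0.
by rewrite mxE !eqxx expr1n mulr1 addr0; apply: le_trans (S_psd _).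
Qed.

Lemma dominating_diag_ordstat_ge0 S (delta : 'rV[R]_d) k :
  psd S -> psd (diag_mx delta - S) -> (k < d)%N ->
  0 <= ordstat [seq delta 0 i | i <- enum 'I_d] k.
Proof.
move=> S_psd D_psd kd; apply: ordstat_ge0; last by rewrite size_map size_enum_ord.
by move=> x /mapP[i _ ->]; apply: dominating_diag_ge0 D_psd.
Qed.

(* For a unit eigenvector v of a psd matrix, lm <v,x>^2 <= x^T S x:
   the quadratic form splits along v and its orthogonal complement. *)
Lemma psd_eigen_qform_ge S v x (lm : R) :
  psd S -> S *m v = lm *: v -> v^T *m v = 1%:M ->
  lm * ((v^T *m x) 0 0) ^+ 2 <= qform S x.
Proof.
move=> [S_sym S_psd] Sv vv.
set a := (v^T *m x) 0 0; set y := x - a *: v.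
have vS : v^T *m S = lm *: v^T by rewrite -{1}S_sym -trmx_mul Sv linearZ.
have vy : v^T *m y = 0.
  by rewrite /y mulmxBr -scalemxAr vv [v^T *m x]mx11_scalar -/a scalemx1 subrr.
have yv : y^T *m v = 0 by rewrite -[LHS]trmxK trmx_mul trmxK vy linear0.
have hx : x = a *: v + y by rewrite /y addrC subrK.
clearbody y a; subst x.
have trD : (a *: v + y)^T = a *: v^T + y^T by rewrite linearD linearZ.
rewrite /qform trD !mulmxDl !mulmxDr -!scalemxAl -!scalemxAr.
rewrite vS -[y^T *m S *m v]mulmxA Sv -!scalemxAl -!scalemxAr vv vy yv.
rewrite !scaler0 !addr0 add0r scalerA scalemx1.
rewrite [X in _ <= X]mxE [X in _ <= X + _]mxE [X in _ <= _ * X + _]mxE.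
rewrite eqxx mulr1n [a * lm]mulrC [a * (lm * a)]mulrCA -expr2 lerDl; exact: S_psd.
Qed.

End QuadraticForms.

Lemma col_unit (R : realFieldType) d (U : 'M[R]_d) l :
  U^T *m U = 1%:M -> (col l U)^T *m col l U = 1%:M.
Proof.
move=> UU; rewrite tr_col rowE colE mulmxA -(mulmxA _ U^T) UU mulmx1.
by rewrite mul_delta_mx; apply/matrixP => i j; rewrite !ord1 !mxE.
Qed.

Section EigenvectorBound.
Variables (R : realFieldType) (d : nat).

Definition restrict (P : pred 'I_d) (v : 'cV[R]_d) : 'cV[R]_d :=
  \col_i (if P i then v i 0 else 0).

Lemma restrict_dot P v :
  (v^T *m restrict P v) 0 0 = \sum_(i | P i) v i 0 ^+ 2.
Proof.
rewrite mxE [RHS]big_mkcond; apply: eq_bigr => i _; rewrite !mxE.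
by case: (P i); rewrite ?mulr0 ?expr2.
Qed.

Lemma qform_diag_restrict (delta : 'rV[R]_d) (P : pred 'I_d) v c :
  (forall i, P i -> delta 0 i <= c) ->
  qform (diag_mx delta) (restrict P v) <= c * \sum_(i | P i) v i 0 ^+ 2.
Proof.
move=> deltaP; rewrite qform_diag mulr_sumr [leRHS]big_mkcond /=.
apply: ler_sum => i _; rewrite mxE; case: ifP => [/deltaP Pi|_].
  by rewrite ler_wpM2r ?sqr_ge0.
by rewrite expr2 !mulr0.
Qed.

Lemma scaled_bound (lm c s b : R) :
  0 <= lm -> 0 <= c -> 0 <= s -> b <= s -> lm * s ^+ 2 <= c * s ->
  lm * b <= c.
Proof.
move=> lm0 c0; rewrite le0r => /orP[/eqP-> b0 _ | s_gt0 bs].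
  by apply: le_trans c0; rewrite mulr_ge0_le0.
rewrite expr2 mulrA ler_pM2r // => lms; apply: le_trans lms.
exact: ler_wpM2l.
Qed.

Lemma eigenvector_bound (S : 'M[R]_d) (delta : 'rV[R]_d) (v : 'cV[R]_d)
    (lm : R) k :
  psd S -> psd (diag_mx delta - S) -> S *m v = lm *: v ->
  v^T *m v = 1%:M -> 0 <= lm -> (0 < k <= d)%N ->
  lm * \sum_(j < k) ordstat [seq v i 0 ^+ 2 | i <- enum 'I_d] j
    <= ordstat [seq delta 0 i | i <- enum 'I_d] k.-1.
Proof.
move=> S_psd D_psd Sv vv lm0 /andP[k0 kd].
set c := ordstat _ k.-1.
set P := [pred i | delta 0 i <= c].
set s := \sum_(i | P i) v i 0 ^+ 2.
have kP : (k <= #|P|)%N by apply: card_le_ordstat; rewrite k0 card_ord.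
have c0 : 0 <= c.
  by apply: dominating_diag_ordstat_ge0 S_psd D_psd _; rewrite prednK.
have s0 : 0 <= s by apply: sumr_ge0 => i _; apply: sqr_ge0.
have small_le_s : \sum_(j < k) ordstat [seq v i 0 ^+ 2 | i <- enum 'I_d] j <= s.
  by apply: sum_ordstat_le => [i|]; rewrite ?sqr_ge0 ?k0.
have quad : lm * s ^+ 2 <= c * s.
  have dot : (v^T *m restrict P v) 0 0 = s := restrict_dot P v.
  rewrite -{1}dot.
  apply: le_trans (psd_eigen_qform_ge (restrict P v) S_psd Sv vv) _.
  apply: le_trans (psd_sub_qform_le _ D_psd) _.
  exact: qform_diag_restrict.
exact: scaled_bound lm0 c0 s0 small_le_s quad.
Qed.

End EigenvectorBound.

(* Each term lam_l * sum_{j<k} u_{l,(j)}^2 of the maximum b_k is bounded by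
   the single-eigenvector bound. *)
Theorem proposition5 (R : realFieldType) (d : nat) (Sigma : 'M[R]_d)
  (lam : 'I_d -> R) (U : 'M[R]_d) (delta : 'rV[R]_d) :
  psd Sigma ->
  (forall l l' : 'I_d, (l <= l')%N -> lam l' <= lam l) ->
  (forall l : 'I_d, 0 <= lam l) ->
  U^T *m U = 1%:M ->
  (forall l : 'I_d, Sigma *m col l U = lam l *: col l U) ->
  psd (diag_mx delta - Sigma) ->
  forall k : nat, (1 <= k <= d)%N ->
    ordstat [seq delta 0 i | i <- enum 'I_d] k.-1 >= bk lam U k.
Proof.
move=> Sigma_psd _ lam0 UU Su D_psd k kd; have /andP[k0 k_le_d] := kd.
apply: bigmax_le => [|l _].
  by apply: dominating_diag_ordstat_ge0 Sigma_psd D_psd _; rewrite prednK.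
have -> : \sum_(j < k) sq_ordstat U l j
        = \sum_(j < k) ordstat [seq col l U i 0 ^+ 2 | i <- enum 'I_d] j.
  by apply: eq_bigr => j _; congr ordstat; apply: eq_map => i; rewrite mxE.
exact: eigenvector_bound (Su l) (col_unit l UU) (lam0 l) kd.
Qed.
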